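(* Let $d\geq 1$, $1\leq a\leq d+1$, and $0<m_1<m_2\leq 2d+2$ be integers. If $m_1\geq a$ and $m_2\geq a+d+1$ with $(m_1,m_2)\neq(a,a+d+1)$, then $$\lim_{n\to\infty}\left(h_d^{(a)}(n)-\ell_{2d+2}^{(m_1,m_2)}(n)\right)=+\infty;$$ if $m_1\leq a$ and $m_2\leq a+d+1$ with $(m_1,m_2)\neq(a,a+d+1)$, then this limit is $-\infty$; and if $(m_1,m_2)=(a,a+d+1)$ then $h_d^{(a)}(n)=\ell_{2d+2}^{(m_1,m_2)}(n)$ for all $n$.
   Context: A partition is a finite nonincreasing sequence of positive integers (its parts); its size is not fixed. The perimeter of a partition with largest part $\alpha$ and $\lambda$ parts is $\alpha+\lambda-1$. A partition has $d$-distinct parts if any two of its parts differ by at least $d$. $h_d^{(a)}(n)$ is the number of partitions of perimeter $n$ whose parts are $d$-distinct and all $\geq a$. For $0<m_1<m_2\le m$, $\ell_m^{(m_1,m_2)}(n)$ is the number of partitions of perimeter $n$ all of whose parts are congruent to $m_1$ or $m_2$ modulo $m$. *)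

From mathcomp Require Import all_boot all_order all_algebra.
Set Implicit Arguments. Unset Strict Implicit. Unset Printing Implicit Defensive.

(* A partition: a nonempty, nonincreasing finite sequence of positive integers
   (the empty sequence has no largest part, hence no perimeter). *)
Definition is_partition (s : seq nat) : bool :=
  [&& s != [::], sorted geq s & all (fun x => 0 < x) s].

(* largest part = head of a nonincreasing sequence; perimeter = alpha + lambda - 1 *)
Definition perimeter (s : seq nat) : nat := head 0 s + size s - 1.

Definition d_distinct (d : nat) (s : seq nat) : bool :=
  pairwise (fun x y => y + d <= x) s.

(* Number of partitions of perimeter n satisfying P.  A partition of perimeter
   n >= 1 has at most n parts, each at most n, so it is enumerated among the
   k-tuples (k <= n) with entries in 'I_(n.+1). *)
Definition count_perim (P : seq nat -> bool) (n : nat) : nat :=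
  \sum_(k < n.+1)
     #|[set t : k.-tuple 'I_n.+1 |
         let s := map val t in
         [&& is_partition s, perimeter s == n & P s]]|.

Definition h_da (d a n : nat) : nat :=
  count_perim (fun s => d_distinct d s && all (fun x => a <= x) s) n.

Definition l_m (m m1 m2 n : nat) : nat :=
  count_perim (fun s => all (fun x => (x == m1 %[mod m]) || (x == m2 %[mod m])) s) n.

Definition tends_to_pinfty (u : nat -> int) : Prop :=
  forall M : int, exists N : nat, forall n, (N <= n)%N -> (M <= u n)%R.

Definition tends_to_minfty (u : nat -> int) : Prop :=
  forall M : int, exists N : nat, forall n, (N <= n)%N -> (u n <= M)%R.

From mathcomp Require Import all_boot all_order all_algebra.
From mathcomp Require Import zify.
Set Implicit Arguments. Unset Strict Implicit. Unset Printing Implicit Defensive.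

(* Both counts are sums over the largest part.  If the admissible part sizes
   are r 0 < r 1 < ..., a partition of perimeter n with largest part r i has
   n - r i further parts, a multiset of admissible sizes at most r i, so there
   are 'C(n - r i + i, i) of them.  For the residues m1, m2 modulo 2d + 2 the
   admissible sizes are m1, m2, m1 + (2d + 2), m2 + (2d + 2), ...  For
   d-distinct partitions with parts >= a, grouping by the number i + 1 of
   parts and subtracting the staircase a + i d, ..., a + d, a yields the same
   sum with r i = a + i (d + 1).  Each summand decreases as r i grows, and for
   i >= 2 lowering r i raises it by at least n - r i, which is unbounded in n;
   so comparing the two enumerations pointwise decides the limit. *)

Lemma eq_count_bij (T1 T2 : eqType) (f : T1 -> T2) (s1 : seq T1) (s2 : seq T2)
    (P1 : pred T1) (P2 : pred T2) :
  uniq s1 -> uniq s2 ->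
  (forall x y, x \in s1 -> P1 x -> y \in s1 -> P1 y -> f x = f y -> x = y) ->
  (forall x, x \in s1 -> P1 x -> (f x \in s2) && P2 (f x)) ->
  (forall y, y \in s2 -> P2 y -> exists2 x, (x \in s1) && P1 x & y = f x) ->
  count P1 s1 = count P2 s2.
Proof.
move=> uniq1 uniq2 f_inj f_into f_onto.
rewrite -!size_filter -(size_map f); apply/perm_size/uniq_perm.
- rewrite map_inj_in_uniq ?filter_uniq // => x y.
  rewrite !mem_filter => /andP[P1x s1x] /andP[P1y s1y]; exact: f_inj.
- exact: filter_uniq.
move=> y; apply/mapP/idP => [[x]|].
  by rewrite !mem_filter => /andP[P1x s1x] ->; case/andP: (f_into x s1x P1x) => -> ->.
rewrite mem_filter => /andP[P2y s2y].
by have [x /andP[s1x P1x] ->] := f_onto y s2y P2y; exists x; rewrite // mem_filter P1x.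
Qed.

Lemma count_sum_key (T : eqType) (s : seq T) (P : pred T) (key : T -> nat) n :
  (forall x, x \in s -> P x -> key x < n) ->
  count P s = \sum_(i < n) count (fun x => P x && (key x == i)) s.
Proof.
elim: s => [|x s IHs] key_lt /=; first by rewrite big1.
rewrite IHs => [|y sy]; last by apply: key_lt; rewrite in_cons sy orbT.
rewrite big_split /=; congr (_ + _); case Px: (P x); last by rewrite big1.
have key_x : key x < n by apply: key_lt; rewrite ?in_cons ?eqxx.
rewrite (bigD1 (Ordinal key_x)) //= eqxx big1 // => i.
by rewrite -val_eqE /= eq_sym => /negbTE ->.
Qed.

Lemma geq_trans : transitive geq.
Proof. exact: rev_trans leq_trans. Qed.

Definition tuple_seqs k N : seq (seq nat) :=
  [seq map val t | t : k.-tuple 'I_N <- enum [set: k.-tuple 'I_N]].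

Lemma mem_tuple_seqs s k N :
  (s \in tuple_seqs k N) = (size s == k) && all (fun x => x < N) s.
Proof.
apply/mapP/andP => [[t _ ->]|[/eqP size_s lt_s]].
  by rewrite size_map size_tuple all_map; split => //; apply/allP => x _ /=.
have val_pmap : map val (pmap (insub : nat -> option 'I_N) s) = s.
  rewrite (pmap_filter (insubK 'I_N)) (eq_filter (isSome_insub 'I_N)).
  exact/all_filterP.
have size_pmap : size (pmap (insub : nat -> option 'I_N) s) == k.
  by rewrite -(size_map val) val_pmap size_s.
by exists (Tuple size_pmap); rewrite ?mem_enum ?inE.
Qed.

Lemma tuple_seqs_uniq k N : uniq (tuple_seqs k N).
Proof.
rewrite map_inj_uniq ?enum_uniq // => t1 t2 /(inj_map val_inj); exact: val_inj.
Qed.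

Lemma card_tuple_seqs k N (p : pred (seq nat)) :
  #|[set t : k.-tuple 'I_N | p (map val t)]| = count p (tuple_seqs k N).
Proof.
rewrite count_map cardsE cardE /enum_mem -size_filter -filter_predI.
by congr size; apply: eq_filter => t /=; rewrite in_setT andbT.
Qed.

Lemma count_nonincreasing_tuple_seqs k M :
  count (sorted geq) (tuple_seqs k M.+1) = 'C(k + M, k).
Proof.
rewrite -card_sorted_tuples card_tuple_seqs.
apply: (eq_count_bij (f := @rev nat)); rewrite ?tuple_seqs_uniq //.
- by move=> x y _ _ _ _; apply: (can_inj revK).
- by move=> x; rewrite !mem_tuple_seqs size_rev all_rev rev_sorted => ->.
move=> y y_k y_sorted; exists (rev y); last by rewrite revK.
by rewrite mem_tuple_seqs size_rev all_rev -mem_tuple_seqs y_k /= rev_sorted.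
Qed.

Lemma bin_addnC m n : 'C(m + n, m) = 'C(m + n, n).
Proof. by rewrite -bin_sub ?leq_addr // addKn. Qed.

Definition perim_seqs n := flatten [seq tuple_seqs k n.+1 | k <- iota 0 n.+1].

Lemma mem_flatten_tuple_seqs s ks N :
  (s \in flatten [seq tuple_seqs k N | k <- ks]) =
  (size s \in ks) && all (fun x => x < N) s.
Proof.
elim: ks => [|k ks IHks] //=; rewrite mem_cat IHks mem_tuple_seqs in_cons.
by case: (size s == k); case: all; case: (_ \in _).
Qed.

Lemma mem_perim_seqs s n :
  (s \in perim_seqs n) = (size s <= n) && all (fun x => x <= n) s.
Proof. by rewrite mem_flatten_tuple_seqs mem_iota. Qed.

Lemma flatten_tuple_seqs_uniq ks N :
  uniq ks -> uniq (flatten [seq tuple_seqs k N | k <- ks]).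
Proof.
elim: ks => [|k ks IHks] //= /andP[ks_k uniq_ks].
rewrite cat_uniq tuple_seqs_uniq IHks // andbT /=.
apply/hasPn => s; rewrite mem_flatten_tuple_seqs mem_tuple_seqs => /andP[ks_s _].
by apply/negP => /andP[/eqP size_s _]; move: ks_s; rewrite size_s (negbTE ks_k).
Qed.

Lemma perim_seqs_uniq n : uniq (perim_seqs n).
Proof. exact/flatten_tuple_seqs_uniq/iota_uniq. Qed.

Definition perim_pred (P : pred (seq nat)) n s :=
  [&& is_partition s, perimeter s == n & P s].

Lemma count_perimE P n : count_perim P n = count (perim_pred P n) (perim_seqs n).
Proof.
transitivity (\sum_(k < n.+1) count (perim_pred P n) (tuple_seqs k n.+1)).
  by apply: eq_bigr => k _; apply: card_tuple_seqs.
rewrite -(big_mkord xpredT (fun k => count (perim_pred P n) (tuple_seqs k n.+1))).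
by rewrite count_flatten -map_comp sumnE big_map.
Qed.

(* Multisets of size n - rho from i + 1 values. *)
Definition perim_count n rho i := if rho <= n then 'C(n - rho + i, i) else 0.

Definition perim_sum (r : nat -> nat) n := \sum_(i < n) perim_count n (r i) i.

Definition enum_index (r : nat -> nat) x := find (fun i => r i == x) (iota 0 x.+1).

Section EnumeratedParts.

Variables (R : pred nat) (r : nat -> nat).
Hypothesis r_incr : forall i, r i < r i.+1.
Hypothesis r0_gt0 : 0 < r 0.
Hypothesis R_r : forall i, R (r i).
Hypothesis r_onto : forall x, 0 < x -> R x -> exists i, r i = x.

Lemma leq_incr : {mono r : i j / i <= j}.
Proof. by apply: leq_mono; apply: homo_ltn ltn_trans r_incr. Qed.

Lemma incr_inj : injective r.
Proof. exact: incn_inj leq_incr. Qed.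

Lemma ltn_incr i : i < r i.
Proof. by elim: i => // i IHi; apply: leq_ltn_trans IHi (r_incr i). Qed.

Lemma incr_gt0 i : 0 < r i.
Proof. exact: leq_ltn_trans (leq0n i) (ltn_incr i). Qed.

Lemma enum_indexK x : 0 < x -> R x -> r (enum_index r x) = x.
Proof.
move=> x_gt0 /(r_onto x_gt0) [i r_i].
have has_x : has (fun k => r k == x) (iota 0 x.+1).
  apply/hasP; exists i; rewrite ?r_i // mem_iota add0n ltnS -r_i.
  exact: ltnW (ltn_incr i).
have := nth_find 0 has_x; rewrite nth_iota ?add0n; first by move/eqP.
by move: has_x; rewrite has_find size_iota.
Qed.

Lemma enum_index_r i : enum_index r (r i) = i.
Proof. by apply: incr_inj; rewrite enum_indexK ?incr_gt0. Qed.

Lemma perim_pred_enum_cons n i v :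
  r i <= n -> size v = n - r i -> all (fun j => j <= i) v -> sorted geq v ->
  perim_pred (all R) n (map r (i :: v)).
Proof.
move=> ri_le size_v v_le v_sorted; rewrite /perim_pred /is_partition /perimeter /=.
rewrite size_map size_v R_r incr_gt0 (path_sortedE geq_trans) !all_map sorted_map /=.
apply/and3P; split; [apply/andP; split | by apply/eqP; lia | by apply/allP => j _ /=].
- apply/andP; split; first by apply/allP => j /(allP v_le) /=; rewrite leq_incr.
  by apply: sub_sorted v_sorted => j k /=; rewrite leq_incr.
- by apply/allP => j _ /=; apply: incr_gt0.
Qed.

Lemma perim_pred_enum_inv n i s :
  perim_pred (all R) n s -> enum_index r (head 0 s) = i ->
  exists2 v, [/\ size v = n - r i, all (fun j => j <= i) v & sorted geq v]
           & s = map r (i :: v).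
Proof.
case: s => [|x t] /and3P[/and3P[//= _ s_sorted /andP[x_gt0 t_gt0]] /eqP perim_s].
case/andP=> Rx Rt /= idx_x.
have r_i : r i = x by rewrite -idx_x enum_indexK.
have idxK_t : {in t, forall y, r (enum_index r y) = y}.
  by move=> y ty; rewrite enum_indexK ?(allP t_gt0) ?(allP Rt).
exists (map (enum_index r) t); last by rewrite /= r_i -map_comp map_id_in.
move: s_sorted; rewrite /= (path_sortedE geq_trans) => /andP[t_le t_sorted].
split.
- by rewrite size_map; move: perim_s; rewrite /perimeter /= -r_i; lia.
- by rewrite all_map; apply/allP => y ty /=; rewrite -leq_incr idxK_t // r_i; apply: (allP t_le).
rewrite sorted_map; apply: (sub_in_sorted (P := fun y => y \in t)) t_sorted.
  by move=> y z ty tz zy; rewrite /= -leq_incr !idxK_t.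
exact/allP.
Qed.

Lemma count_perim_head n i :
  count (fun s => perim_pred (all R) n s && (enum_index r (head 0 s) == i))
        (perim_seqs n) = perim_count n (r i) i.
Proof.
rewrite /perim_count; case: ifP => [ri_le | ri_gt]; last first.
  apply/eqP; rewrite -leqn0 leqNgt -has_count; apply/hasPn => s _.
  apply/negP => /andP[/and3P[/and3P[+ _ +] /eqP + +] /eqP].
  case: s => // x t _ /andP[x_gt0 _] perim_s /andP[Rx _] idx_x.
  have x_le : x <= n by move: perim_s; rewrite /perimeter /=; lia.
  by move: ri_gt; rewrite -idx_x enum_indexK // x_le.
rewrite -bin_addnC -count_nonincreasing_tuple_seqs; symmetry.
apply: (eq_count_bij (f := fun v => map r (i :: v))).
- exact: tuple_seqs_uniq.
- exact: perim_seqs_uniq.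
- by move=> v w _ _ _ _ [] /(inj_map incr_inj).
- move=> v; rewrite mem_tuple_seqs => /andP[/eqP size_v v_le] v_sorted.
  rewrite /= enum_index_r eqxx perim_pred_enum_cons //.
  rewrite mem_perim_seqs /= size_map size_v ri_le all_map andbT.
  apply/andP; split; first by have := incr_gt0 i; lia.
  by apply/allP => j /(allP v_le); rewrite ltnS -leq_incr => /leq_trans; apply.
move=> s _ /andP[s_perim /eqP /(perim_pred_enum_inv s_perim)[v [size_v v_le v_sorted] ->]].
by exists v; rewrite // mem_tuple_seqs size_v eqxx v_sorted andbT.
Qed.

Lemma count_perim_enum n : count_perim (all R) n = perim_sum r n.
Proof.
rewrite count_perimE (count_sum_key (key := fun s => enum_index r (head 0 s)) (n := n)).
  by apply: eq_bigr => i _; apply: count_perim_head.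
case=> [|x t] _ /and3P[/and3P[//= _ _ /andP[x_gt0 _]] /eqP perim_s /andP[Rx _]] /=.
have := ltn_incr (enum_index r x); rewrite enum_indexK //.
by move: perim_s; rewrite /perimeter /=; lia.
Qed.

End EnumeratedParts.

Section Staircase.

Variables a d : nat.

Fixpoint stair_add (u : seq nat) : seq nat :=
  if u is x :: w then (x + a + size w * d) :: stair_add w else [::].

Fixpoint stair_sub (s : seq nat) : seq nat :=
  if s is y :: w then (y - a - size w * d) :: stair_sub w else [::].

Let gap : rel nat := fun x y => y + d <= x.

Let gap_trans : transitive gap.
Proof. by move=> y x z; rewrite /gap; lia. Qed.

Lemma size_stair_add u : size (stair_add u) = size u.
Proof. by elim: u => //= x w ->. Qed.

Lemma size_stair_sub s : size (stair_sub s) = size s.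
Proof. by elim: s => //= y w ->. Qed.

Lemma stair_addK : cancel stair_add stair_sub.
Proof. by elim=> //= x w IHw; rewrite size_stair_add IHw; congr (_ :: _); lia. Qed.

Lemma all_stair_add u : all (leq a) (stair_add u).
Proof. by elim: u => //= x w ->; rewrite andbT; lia. Qed.

Lemma path_stair_add x u :
  path geq x u -> path gap (x + a + size u * d) (stair_add u).
Proof.
elim: u x => //= y w IHw x /andP[yx w_path].
by rewrite IHw // andbT /gap; lia.
Qed.

Lemma stair_head_lb y w :
  path gap y w -> all (leq a) (y :: w) -> a + size w * d <= y.
Proof.
elim: w y => [|z w IHw] y /=; first by rewrite mul0n addn0 andbT.
case/andP=> zy w_path /and3P[_ az aw].
by have := IHw z w_path; rewrite /= az aw => /(_ isT); move: zy; rewrite /gap; lia.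
Qed.

Lemma stair_subK s : sorted gap s -> all (leq a) s -> stair_add (stair_sub s) = s.
Proof.
elim: s => //= y w IHw w_path /andP[ay aw].
have := stair_head_lb w_path; rewrite /= ay aw => /(_ isT) lb.
by rewrite size_stair_sub IHw ?(path_sorted w_path) //; congr (_ :: _); lia.
Qed.

Lemma path_stair_sub y w : path gap y w -> all (leq a) (y :: w) ->
  path geq (y - a - size w * d) (stair_sub w).
Proof.
elim: w y => //= z w IHw y /andP[zy w_path] /and3P[_ az aw].
have := stair_head_lb w_path; rewrite /= az aw => /(_ isT) lb.
by rewrite IHw ?az // andbT; move: zy; rewrite /gap; lia.
Qed.

Let hpred s := d_distinct d s && all (leq a) s.

Lemma stair_perim_bound n s : perim_pred hpred n s -> a + (size s).-1 * d.+1 <= n.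
Proof.
case: s => [|y w] /and3P[/and3P[//= _ _ _] /eqP perim_s /andP[w_gap w_ge]].
rewrite /d_distinct -(sorted_pairwise gap_trans) in w_gap.
have := stair_head_lb w_gap w_ge.
by move: perim_s; rewrite /perimeter /= mulnS; lia.
Qed.

Hypothesis a_gt0 : 0 < a.

Lemma stair_add_perim n i v :
  a + i * d.+1 <= n -> v \in tuple_seqs i (n - (a + i * d.+1)).+1 -> sorted geq v ->
  let s := stair_add (n - (a + i * d.+1) :: v) in
  (s \in perim_seqs n) && (perim_pred hpred n s && ((size s).-1 == i)).
Proof.
move=> le_n; rewrite mem_tuple_seqs => /andP[/eqP size_v v_le] v_sorted /=.
set x := n - _; have x_le : x + a + i * d <= n by rewrite /x mulnS; lia.
have /path_stair_add : path geq x v by rewrite (path_sortedE geq_trans) v_sorted andbT.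
rewrite size_v => s_path.
have := s_path; rewrite (path_sortedE gap_trans) => /andP[head_gap w_gap].
have s_ge := all_stair_add v.
rewrite mem_perim_seqs /perim_pred /is_partition /perimeter /d_distinct /=.
rewrite size_stair_add size_v eqxx andbT /hpred /d_distinct.
rewrite -(sorted_pairwise gap_trans) /= s_path s_ge x_le andbT.
have head_gt0 : 0 < x + a + i * d by lia.
apply/and4P; split.
- apply/andP; split; first by move: le_n; rewrite mulnS; lia.
  by apply/allP => y /(allP head_gap); rewrite /gap; lia.
- rewrite (path_sortedE geq_trans) head_gt0 /= -andbA; apply/and3P; split.
  + by apply/allP => y /(allP head_gap); rewrite /gap /=; lia.
  + by apply: sub_sorted w_gap => y z; rewrite /gap /=; lia.
  + by apply/allP => y /(allP s_ge) /=; lia.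
- by apply/eqP; rewrite /x mulnS; lia.
- by rewrite /=; lia.
Qed.

Lemma stair_add_onto n i s :
  perim_pred hpred n s -> (size s).-1 = i ->
  exists2 v, (v \in tuple_seqs i (n - (a + i * d.+1)).+1) && sorted geq v
           & s = stair_add (n - (a + i * d.+1) :: v).
Proof.
case: s => [|y w] /and3P[/and3P[//= _ _ _] /eqP perim_s /andP[w_gap w_ge]] /= size_w.
rewrite /d_distinct -(sorted_pairwise gap_trans) in w_gap.
have head_eq : y - a - size w * d = n - (a + i * d.+1).
  by have := stair_head_lb w_gap w_ge; move: perim_s; rewrite /perimeter /= -size_w mulnS; lia.
exists (stair_sub w); last by rewrite -head_eq -[LHS](stair_subK w_gap w_ge).
rewrite mem_tuple_seqs size_stair_sub size_w eqxx /=.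
have := path_stair_sub w_gap w_ge; rewrite head_eq (path_sortedE geq_trans).
by case/andP=> -> ->.
Qed.

Lemma count_perim_size n i :
  count (fun s => perim_pred hpred n s && ((size s).-1 == i)) (perim_seqs n) =
  perim_count n (a + i * d.+1) i.
Proof.
rewrite /perim_count; case: ifP => [le_n | gt_n]; last first.
  apply/eqP; rewrite -leqn0 leqNgt -has_count; apply/hasPn => s _.
  apply/negP => /andP[/stair_perim_bound + /eqP size_s].
  by rewrite size_s gt_n.
rewrite addnC -count_nonincreasing_tuple_seqs; symmetry.
apply: (eq_count_bij (f := fun v => stair_add (n - (a + i * d.+1) :: v))).
- exact: tuple_seqs_uniq.
- exact: perim_seqs_uniq.
- by move=> v w _ _ _ _ /(can_inj stair_addK) [].
- by move=> v /stair_add_perim; apply.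
by move=> s _ /andP[s_perim /eqP]; apply: stair_add_onto.
Qed.

End Staircase.

Lemma h_daE d a n : 0 < a -> h_da d a n = perim_sum (fun i => a + i * d.+1) n.
Proof.
move=> a_gt0; rewrite /h_da count_perimE.
rewrite (count_sum_key (key := fun s => (size s).-1) (n := n)) => [|s _ s_perim].
  by apply: eq_bigr => i _; apply: count_perim_size.
by have := stair_perim_bound s_perim; move: (size s).-1 => k; nia.
Qed.

Lemma bin_addn_geq k y : 0 < k -> y <= 'C(y + k, k).
Proof.
case: k => // k _; elim: k => [|k IHk]; first by rewrite addn1 bin1.
by rewrite addnS binS (leq_trans IHk) ?leq_addl.
Qed.

Lemma leq_perim_count n rho rho' i :
  rho <= rho' -> perim_count n rho' i <= perim_count n rho i.
Proof.
rewrite /perim_count => le_rho; case: ifP => // le_n.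
by rewrite (leq_trans le_rho le_n) leq_bin2l // leq_add2r leq_sub2l.
Qed.

Lemma perim_count_gap n rho rho' i : rho < rho' <= n -> 1 < i ->
  perim_count n rho' i + (n - rho') <= perim_count n rho i.
Proof.
case/andP=> lt_rho le_n; case: i => // i i_gt0.
rewrite /perim_count le_n (leq_trans (ltnW lt_rho) le_n).
have -> : n - rho + i.+1 = (n - rho' + i.+1).+1 + (n - rho - (n - rho').+1) by lia.
apply: leq_trans (leq_bin2l _ (leq_addr _ _)); rewrite binS leq_add2l.
have -> : n - rho' + i.+1 = (n - rho').+1 + i by lia.
exact: leq_trans (leqnSn _) (bin_addn_geq _ i_gt0).
Qed.

Section PerimSumComparison.

Variables r1 r2 : nat -> nat.
Hypothesis le_r : forall i, r1 i <= r2 i.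

Lemma perim_sum_gap n i0 : 1 < i0 < n -> r1 i0 < r2 i0 <= n ->
  perim_sum r2 n + (n - r2 i0) <= perim_sum r1 n.
Proof.
move=> /andP[i0_gt1 i0_lt] /andP[lt_r le_n]; rewrite /perim_sum.
rewrite (bigD1 (Ordinal i0_lt)) // [X in _ <= X](bigD1 (Ordinal i0_lt)) //= addnAC.
apply: leq_add; first by apply: perim_count_gap; rewrite ?lt_r.
by apply: leq_sum => i _; apply: leq_perim_count.
Qed.

Lemma perim_sum_diverge : (exists2 i0, 1 < i0 & r1 i0 != r2 i0) ->
  tends_to_pinfty (fun n => (perim_sum r1 n)%:Z - (perim_sum r2 n)%:Z)%R.
Proof.
case=> i0 i0_gt1 ne_r M; exists (r2 i0 + i0 + `|M|.+1) => n le_n.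
have lt_r : r1 i0 < r2 i0 by rewrite ltn_neqAle ne_r le_r.
have := @perim_sum_gap n i0; rewrite i0_gt1 lt_r /=; lia.
Qed.

Lemma perim_sum_diverge_minfty : (exists2 i0, 1 < i0 & r2 i0 != r1 i0) ->
  tends_to_minfty (fun n => (perim_sum r2 n)%:Z - (perim_sum r1 n)%:Z)%R.
Proof.
case=> i0 i0_gt1; rewrite eq_sym => ne_r M.
have [N le_N] := perim_sum_diverge (ex_intro2 _ _ i0 i0_gt1 ne_r) (- M)%R.
by exists N => n /le_N; lia.
Qed.

End PerimSumComparison.

Lemma nat_parity_ind (P : nat -> Prop) :
  (forall k, P k.*2) -> (forall k, P k.*2.+1) -> forall i, P i.
Proof.
move=> P_even P_odd i; rewrite -[i]odd_double_half.
by case: (odd i); [rewrite add1n; apply: P_odd | rewrite add0n; apply: P_even].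
Qed.

(* The positive integers congruent to m1 or m2 modulo m, in increasing order,
   provided 0 < m1 < m2 <= m. *)
Definition resid_enum m1 m2 m i := (if odd i then m2 else m1) + i./2 * m.

Lemma resid_enum_double m1 m2 m k : resid_enum m1 m2 m k.*2 = m1 + k * m.
Proof. by rewrite /resid_enum odd_double doubleK. Qed.

Lemma resid_enum_doubleS m1 m2 m k : resid_enum m1 m2 m k.*2.+1 = m2 + k * m.
Proof. by rewrite /resid_enum /= odd_double uphalf_double. Qed.

Section Residues.

Variables m1 m2 m : nat.
Hypotheses (m1_gt0 : 0 < m1) (m1_lt_m2 : m1 < m2) (m2_le_m : m2 <= m).

Let resid x := (x == m1 %[mod m]) || (x == m2 %[mod m]).

Lemma resid_enum_incr i : resid_enum m1 m2 m i < resid_enum m1 m2 m i.+1.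
Proof.
elim/nat_parity_ind: i => k; first by rewrite resid_enum_double resid_enum_doubleS; lia.
by rewrite -doubleS resid_enum_doubleS resid_enum_double mulSn; lia.
Qed.

Lemma resid_resid_enum i : resid (resid_enum m1 m2 m i).
Proof.
elim/nat_parity_ind: i => k; rewrite /resid ?resid_enum_double ?resid_enum_doubleS.
  by rewrite addnC modnMDl eqxx.
by rewrite addnC modnMDl eqxx orbT.
Qed.

Lemma resid_enum_onto x : 0 < x -> resid x -> exists i, resid_enum m1 m2 m i = x.
Proof.
move=> x_gt0 /orP[] /eqP x_mod.
  exists (x %/ m).*2; rewrite resid_enum_double.
  by move: x_mod; rewrite (modn_small (m := m1)); lia.
have [m2_lt | m_le_m2] := ltnP m2 m.
  exists (x %/ m).*2.+1; rewrite resid_enum_doubleS.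
  by move: x_mod; rewrite (modn_small (m := m2)); lia.
have m2_eq : m2 = m by lia.
exists (x %/ m).-1.*2.+1; rewrite resid_enum_doubleS.
move: x_mod; rewrite m2_eq modnn => x_mod; have := divn_eq x m; rewrite x_mod addn0.
by case: (x %/ m) => [|q] /=; [lia | rewrite mulSn => ->].
Qed.

Lemma l_mE n : l_m m m1 m2 n = perim_sum (resid_enum m1 m2 m) n.
Proof.
apply: count_perim_enum.
- exact: resid_enum_incr.
- by rewrite /resid_enum mul0n addn0.
- exact: resid_resid_enum.
- exact: resid_enum_onto.
Qed.

End Residues.

Section ArithmeticVersusResidues.

Variables a d m1 m2 : nat.

Lemma arith_leq_resid_enum : a <= m1 -> a + d + 1 <= m2 ->
  forall i, a + i * d.+1 <= resid_enum m1 m2 (2 * d + 2) i.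
Proof.
move=> le1 le2; elim/nat_parity_ind => k.
  by rewrite resid_enum_double -muln2; nia.
by rewrite resid_enum_doubleS -muln2; nia.
Qed.

Lemma resid_enum_leq_arith : m1 <= a -> m2 <= a + d + 1 ->
  forall i, resid_enum m1 m2 (2 * d + 2) i <= a + i * d.+1.
Proof.
move=> le1 le2; elim/nat_parity_ind => k.
  by rewrite resid_enum_double -muln2; nia.
by rewrite resid_enum_doubleS -muln2; nia.
Qed.

Lemma arith_neq_resid_enum : (m1, m2) <> (a, a + d + 1) ->
  exists2 i, 1 < i & a + i * d.+1 != resid_enum m1 m2 (2 * d + 2) i.
Proof.
move=> ne; have [m1_eq | m1_ne] := eqVneq m1 a; [exists 3 | exists 2] => //.
  rewrite -[3]/(1.*2.+1) resid_enum_doubleS; apply/eqP => eq3.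
  by apply: ne; congr pair; lia.
by rewrite -[2]/(1.*2) resid_enum_double; apply/eqP; move/eqP: m1_ne; lia.
Qed.

End ArithmeticVersusResidues.

Theorem mainTheorem11 (d a m1 m2 : nat) :
  1 <= d -> 1 <= a <= d.+1 -> 0 < m1 < m2 -> m2 <= (2 * d + 2) ->
  [/\ (a <= m1 -> a + d + 1 <= m2 -> (m1, m2) <> (a, a + d + 1) ->
         tends_to_pinfty (fun n => ((h_da d a n)%:Z - (l_m (2 * d + 2) m1 m2 n)%:Z)%R)),
      (m1 <= a -> m2 <= a + d + 1 -> (m1, m2) <> (a, a + d + 1) ->
         tends_to_minfty (fun n => ((h_da d a n)%:Z - (l_m (2 * d + 2) m1 m2 n)%:Z)%R))
    & ((m1, m2) = (a, a + d + 1) -> forall n, h_da d a n = l_m (2 * d + 2) m1 m2 n)].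
Proof.
move=> _ /andP[a_gt0 _] /andP[m1_gt0 m1_lt_m2] m2_le.
have hE n : h_da d a n = perim_sum (fun i => a + i * d.+1) n := h_daE d n a_gt0.
have lE n := l_mE m1_gt0 m1_lt_m2 m2_le n.
split=> [le1 le2 ne M | le1 le2 ne M | [m1_eq m2_eq] n].
- have [N le_N] := perim_sum_diverge (arith_leq_resid_enum le1 le2)
                                     (arith_neq_resid_enum ne) M.
  by exists N => n /le_N; rewrite hE lE.
- have [N le_N] := perim_sum_diverge_minfty (resid_enum_leq_arith le1 le2)
                                            (arith_neq_resid_enum ne) M.
  by exists N => n /le_N; rewrite hE lE.
rewrite hE lE; apply: eq_bigr => i _; congr perim_count; apply/eqP.
by rewrite eqn_leq arith_leq_resid_enum ?resid_enum_leq_arith ?m1_eq ?m2_eq.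
Qed.
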